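(* Every self-similar tree $T$ admits a rigid structure. That is, there is a family $\{\varphi_{vw}\}$ consisting of one morphism $\varphi_{vw}\in\mathrm{Mor}(v,w)$ for each ordered pair $(v,w)$ of vertices of $T$ of the same type, satisfying two conditions: (1) $\varphi_{vw}\circ\varphi_{uv}=\varphi_{uw}$ for all triples $u,v,w$ of the same type; (2) whenever $v'$ is a descendant of $v$ and $w'=\varphi_{vw}(v')$, the morphism $\varphi_{v'w'}$ is the restriction of $\varphi_{vw}$ to $T_{v'}$.
   Context: A self-similar tree is a locally finite rooted tree $T$ (identified with its vertex set) with a partition of the vertices into finitely many types, and for each pair $u,v$ of same-type vertices a nonempty finite set $\mathrm{Mor}(u,v)$ of rooted tree isomorphisms $T_u\to T_v$ (morphisms) preserving types, where $T_v$ is the subtree of $v$ and its descendants. The morphisms satisfy: (a) inverses of morphisms are morphisms; (b) compositions $\psi\varphi$ with $\varphi\in\mathrm{Mor}(u,v)$, $\psi\in\mathrm{Mor}(v,w)$ lie in $\mathrm{Mor}(u,w)$; (c) restrictions of a morphism $\varphi\in\mathrm{Mor}(v,w)$ to $T_u$, $u\in T_v$, lie in $\mathrm{Mor}(u,\varphi(u))$. *)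

From Stdlib Require Import List.

Record rtree := {
  V : Type;
  root : V;
  parent : V -> V;
  parent_root : parent root = root;
  reach_root : forall x : V, exists n, Nat.iter n parent x = root;
  loc_finite : forall v : V, exists l : list V,
      forall x : V, x <> root -> parent x = v -> In x l
}.

Definition desc (T : rtree) (u x : V T) : Prop :=
  exists n, Nat.iter n (parent T) x = u.

Definition sub (T : rtree) (u : V T) : Type := { x : V T | desc T u x }.

Definition child (T : rtree) (x y : V T) : Prop :=
  parent T y = x /\ y <> x.

Definition is_rooted_iso (T : rtree) (u v : V T) (f : sub T u -> sub T v) : Prop :=
  (exists g : sub T v -> sub T u,
      (forall x, g (f x) = x) /\ (forall y, f (g y) = y)) /\
  (forall x : sub T u, proj1_sig x = u -> proj1_sig (f x) = v) /\
  (forall x y : sub T u,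
      child T (proj1_sig x) (proj1_sig y) <->
      child T (proj1_sig (f x)) (proj1_sig (f y))).

Definition is_restriction (T : rtree) (v w v' w' : V T)
    (psi : sub T v' -> sub T w') (phi : sub T v -> sub T w) : Prop :=
  forall (z : sub T v') (hz : desc T v (proj1_sig z)),
    proj1_sig (psi z) = proj1_sig (phi (exist _ (proj1_sig z) hz)).

Record selfsim (T : rtree) := {
  Ty : Type;
  Ty_finite : exists l : list Ty, forall t : Ty, In t l;
  typ : V T -> Ty;
  Mor : forall u v : V T, (sub T u -> sub T v) -> Prop;
  Mor_same_type : forall u v f, Mor u v f -> typ u = typ v;
  Mor_nonempty : forall u v, typ u = typ v -> exists f, Mor u v f;
  Mor_finite : forall u v, exists l : list (sub T u -> sub T v),
      forall f, Mor u v f -> In f l;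
  Mor_iso : forall u v f, Mor u v f -> is_rooted_iso T u v f;
  Mor_typ : forall u v f, Mor u v f ->
      forall x : sub T u, typ (proj1_sig (f x)) = typ (proj1_sig x);
  Mor_inv : forall u v f, Mor u v f ->
      exists g, Mor v u g /\ (forall x, g (f x) = x) /\ (forall y, f (g y) = y);
  Mor_comp : forall u v w f g, Mor u v f -> Mor v w g ->
      Mor u w (fun x => g (f x));
  Mor_restr : forall v w f, Mor v w f -> forall y : sub T v,
      exists psi, Mor (proj1_sig y) (proj1_sig (f y)) psi /\
                  is_restriction T v w (proj1_sig y) (proj1_sig (f y)) psi f
}.

From Stdlib Require Import List Arith ClassicalEpsilon ProofIrrelevance FunctionalExtensionality.

(* Fix a representative [rep t] of every type t.  Along the path from the root
   to x build a "frame" at x, a morphism from T_(rep (typ x)) onto T_x: the frame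
   at a child x of p is the frame at p, restricted to the subtree of the preimage
   y of x, precomposed with an arbitrary morphism T_(rep (typ y)) -> T_y.  By
   induction along paths, for y below rep t and any v of type t, the frame at
   frame_v(y) is frame_v composed with a morphism Th_y independent of v.  Hence
   phi_vw := frame_w o frame_v^-1 is compatible with composition (clear) and with
   restriction (the two frames at the images of y differ by the same factor). *)

Lemma sub_eq (T : rtree) (u : V T) (a b : sub T u) :
  proj1_sig a = proj1_sig b -> a = b.
Proof.
  destruct a as [a ha], b as [b hb]; simpl; intros ->.
  f_equal; apply proof_irrelevance.
Qed.

Lemma desc_refl (T : rtree) (u : V T) : desc T u u.
Proof. exists 0; reflexivity. Qed.

Lemma desc_trans (T : rtree) (u y a : V T) : desc T u y -> desc T y a -> desc T u a.
Proof.
  intros [m Hm] [n Hn]; exists (m + n).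
  rewrite Nat.iter_add, Hn; exact Hm.
Qed.

Lemma desc_parent (T : rtree) (x : V T) : desc T (parent T x) x.
Proof. exists 1; reflexivity. Qed.

Lemma iter_parent_fixed (T : rtree) (y : V T) k :
  parent T y = y -> Nat.iter k (parent T) y = y.
Proof. intros H; induction k as [|k IH]; simpl; [reflexivity|]. rewrite IH; exact H. Qed.

Lemma iter_parent_root (T : rtree) k : Nat.iter k (parent T) (root T) = root T.
Proof. apply iter_parent_fixed, parent_root. Qed.

(* Vertices outside T_w are sent to the root w of T_w. *)
Definition tosub (T : rtree) (w x : V T) : sub T w :=
  match excluded_middle_informative (desc T w x) with
  | left h => exist _ x h
  | right _ => exist _ w (desc_refl T w)
  end.

Lemma tosub_eq (T : rtree) (w x : V T) : desc T w x -> proj1_sig (tosub T w x) = x.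
Proof.
  intros h; unfold tosub; destruct (excluded_middle_informative (desc T w x));
  [reflexivity | contradiction].
Qed.

Section RigidStructure.

Variables (T : rtree) (ss : selfsim T).

(* Morphisms are handled through their action on vertices, as total maps
   V T -> V T; this makes composition and restriction plain function operations. *)
Definition mor_map (u v : V T) (U : V T -> V T) : Prop :=
  exists f, Mor T ss u v f /\ forall a : sub T u, proj1_sig (f a) = U (proj1_sig a).

Section MorMap.

Variables (u v : V T) (U : V T -> V T).
Hypothesis HU : mor_map u v U.

Lemma mor_map_desc a : desc T u a -> desc T v (U a).
Proof.
  destruct HU as [f [_ Hf]]; intros h.
  rewrite <- (Hf (exist _ a h) : proj1_sig (f _) = U a); exact (proj2_sig _).
Qed.

Lemma mor_map_root : U u = v.
Proof.
  destruct HU as [f [Mf Hf]]; destruct (Mor_iso T ss _ _ _ Mf) as [_ [Hroot _]].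
  rewrite <- (Hf (exist _ u (desc_refl T u)) : proj1_sig (f _) = U u); apply Hroot; reflexivity.
Qed.

Lemma mor_map_typ a : desc T u a -> typ T ss (U a) = typ T ss a.
Proof.
  destruct HU as [f [Mf Hf]]; intros h.
  rewrite <- (Hf (exist _ a h) : proj1_sig (f _) = U a); exact (Mor_typ T ss _ _ _ Mf (exist _ a h)).
Qed.

Lemma mor_map_inj a b : desc T u a -> desc T u b -> U a = U b -> a = b.
Proof.
  destruct HU as [f [Mf Hf]]; intros ha hb E.
  destruct (Mor_iso T ss _ _ _ Mf) as [[g [Hgf _]] _].
  assert (Ef : f (exist _ a ha) = f (exist _ b hb)) by (apply sub_eq; rewrite !Hf; exact E).
  apply (f_equal (fun x => proj1_sig (g x))) in Ef; rewrite !Hgf in Ef; exact Ef.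
Qed.

Lemma mor_map_surj b : desc T v b -> exists a, desc T u a /\ U a = b.
Proof.
  destruct HU as [f [Mf Hf]]; intros hb.
  destruct (Mor_iso T ss _ _ _ Mf) as [[g [_ Hfg]] _].
  exists (proj1_sig (g (exist _ b hb))); split; [exact (proj2_sig _)|].
  rewrite <- Hf, Hfg; reflexivity.
Qed.

Lemma mor_map_child a b : desc T u a -> desc T u b -> child T a b -> child T (U a) (U b).
Proof.
  destruct HU as [f [Mf Hf]]; intros ha hb Hab.
  destruct (Mor_iso T ss _ _ _ Mf) as [_ [_ Hchild]].
  rewrite <- (Hf (exist _ a ha) : proj1_sig (f _) = U a), <- (Hf (exist _ b hb) : proj1_sig (f _) = U b).
  exact (proj1 (Hchild (exist _ a ha) (exist _ b hb)) Hab).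
Qed.

Lemma mor_map_restr y : desc T u y -> mor_map y (U y) U.
Proof.
  destruct HU as [f [Mf Hf]]; intros hy.
  destruct (Mor_restr T ss _ _ _ Mf (exist _ y hy)) as [psi [Mpsi Hpsi]]; simpl in *.
  rewrite <- (Hf (exist _ y hy) : proj1_sig (f _) = U y); exists psi; split; [exact Mpsi|].
  intros z; rewrite (Hpsi z (desc_trans T _ _ _ hy (proj2_sig z))), Hf; reflexivity.
Qed.

Lemma Mor_of_mor_map : Mor T ss u v (fun a => tosub T v (U (proj1_sig a))).
Proof.
  destruct HU as [f [Mf Hf]].
  replace (fun a : sub T u => tosub T v (U (proj1_sig a))) with f; [exact Mf|].
  apply functional_extensionality; intros a; apply sub_eq.
  rewrite tosub_eq, Hf; [reflexivity|].
  exact (mor_map_desc _ (proj2_sig a)).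
Qed.

End MorMap.

Lemma mor_map_comp u v w U W :
  mor_map u v U -> mor_map v w W -> mor_map u w (fun x => W (U x)).
Proof.
  intros [f [Mf Hf]] [g [Mg Hg]]; exists (fun x => g (f x)); split.
  - exact (Mor_comp T ss _ _ _ _ _ Mf Mg).
  - intros a; rewrite Hg, Hf; reflexivity.
Qed.

Lemma mor_map_id u : mor_map u u (fun x => x).
Proof.
  destruct (Mor_nonempty T ss u u eq_refl) as [f Mf].
  destruct (Mor_inv T ss _ _ _ Mf) as [g [Mg [Hgf _]]].
  exists (fun x => g (f x)); split; [exact (Mor_comp T ss _ _ _ _ _ Mf Mg)|].
  intros a; rewrite Hgf; reflexivity.
Qed.

Lemma mor_map_exists u v : typ T ss u = typ T ss v -> exists U, mor_map u v U.
Proof.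
  intros E; destruct (Mor_nonempty T ss u v E) as [f Mf].
  exists (fun x => match excluded_middle_informative (desc T u x) with
                   | left h => proj1_sig (f (exist _ x h))
                   | right _ => x end).
  exists f; split; [exact Mf|]; intros [a ha]; simpl.
  destruct (excluded_middle_informative (desc T u a)) as [h|h]; [|contradiction].
  do 3 f_equal; apply proof_irrelevance.
Qed.

(* A preimage of x under U inside T_u (junk value x when there is none). *)
Definition inv_on (u : V T) (U : V T -> V T) (x : V T) : V T :=
  epsilon (inhabits x) (fun a => desc T u a /\ U a = x).

Lemma inv_on_spec u v U x : mor_map u v U -> desc T v x ->
  desc T u (inv_on u U x) /\ U (inv_on u U x) = x.
Proof. intros H hx; unfold inv_on; apply epsilon_spec; exact (mor_map_surj _ _ _ H x hx). Qed.

Lemma inv_on_cancel u v U a : mor_map u v U -> desc T u a -> inv_on u U (U a) = a.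
Proof.
  intros H ha.
  destruct (inv_on_spec u v U (U a) H (mor_map_desc _ _ _ H a ha)) as [h1 h2].
  exact (mor_map_inj _ _ _ H _ _ h1 ha h2).
Qed.

Lemma mor_map_inv u v U : mor_map u v U -> mor_map v u (inv_on u U).
Proof.
  intros H; pose proof H as [f [Mf Hf]].
  destruct (Mor_inv T ss _ _ _ Mf) as [g [Mg [_ Hfg]]].
  exists g; split; [exact Mg|]; intros b.
  destruct (inv_on_spec u v U (proj1_sig b) H (proj2_sig b)) as [h1 h2].
  apply (mor_map_inj _ _ _ H _ _ (proj2_sig _) h1).
  rewrite h2, <- Hf, Hfg; reflexivity.
Qed.

Definition rep (t : Ty T ss) : V T :=
  epsilon (inhabits (root T)) (fun x => typ T ss x = t).

Lemma rep_typ x : typ T ss (rep (typ T ss x)) = typ T ss x.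
Proof. unfold rep; apply epsilon_spec; exists x; reflexivity. Qed.

Notation rep_of x := (rep (typ T ss x)).

Definition base_map (x : V T) : V T -> V T :=
  epsilon (inhabits (fun z => z)) (fun U => mor_map (rep_of x) x U).

Lemma base_map_spec x : mor_map (rep_of x) x (base_map x).
Proof. unfold base_map; apply epsilon_spec, mor_map_exists, rep_typ. Qed.

(* [frame_fuel n x] is the frame at x whenever the root is n parent steps above
   x; the fuel only serves to make the recursion structural. *)
Fixpoint frame_fuel (n : nat) (x : V T) : V T -> V T :=
  match n with
  | 0 => base_map x
  | S m =>
    if excluded_middle_informative (x = root T) then base_map x
    else let P := frame_fuel m (parent T x) in
         fun z => P (base_map (inv_on (rep_of (parent T x)) P x) z)
  end.

Lemma frame_fuel_S m x : frame_fuel (S m) x =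
  if excluded_middle_informative (x = root T) then base_map x
  else let P := frame_fuel m (parent T x) in
       fun z => P (base_map (inv_on (rep_of (parent T x)) P x) z).
Proof. reflexivity. Qed.

Lemma frame_fuel_succ n x : Nat.iter n (parent T) x = root T ->
  frame_fuel n x = frame_fuel (S n) x.
Proof.
  revert x; induction n as [|n IH]; intros x Hx.
  - simpl in Hx; subst x; simpl.
    destruct (excluded_middle_informative (root T = root T)); congruence.
  - rewrite (frame_fuel_S n x), (frame_fuel_S (S n) x).
    destruct (excluded_middle_informative (x = root T)); [reflexivity|].
    rewrite Nat.iter_succ_r in Hx; rewrite <- (IH _ Hx); reflexivity.
Qed.

Lemma frame_fuel_indep n m x :
  Nat.iter n (parent T) x = root T -> Nat.iter m (parent T) x = root T ->
  frame_fuel n x = frame_fuel m x.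
Proof.
  assert (K : forall k n, Nat.iter n (parent T) x = root T ->
                frame_fuel n x = frame_fuel (k + n) x).
  { induction k as [|k IH]; intros n' H; [reflexivity|].
    rewrite (IH n' H); apply frame_fuel_succ.
    rewrite Nat.iter_add, H; apply iter_parent_root. }
  intros H1 H2; rewrite (K m n H1), (K n m H2), Nat.add_comm; reflexivity.
Qed.

Lemma frame_fuel_spec n x : Nat.iter n (parent T) x = root T ->
  mor_map (rep_of x) x (frame_fuel n x).
Proof.
  revert x; induction n as [|n IH]; intros x Hx; [apply base_map_spec|].
  rewrite frame_fuel_S.
  destruct (excluded_middle_informative (x = root T)); [apply base_map_spec|].
  rewrite Nat.iter_succ_r in Hx; specialize (IH _ Hx).
  set (P := frame_fuel n (parent T x)) in *.
  destruct (inv_on_spec _ _ P x IH (desc_parent T x)) as [h1 h2].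
  set (y := inv_on _ P x) in *.
  pose proof (mor_map_restr _ _ _ IH y h1) as Hres; rewrite h2 in Hres.
  pose proof (mor_map_typ _ _ _ IH y h1) as Ety; rewrite h2 in Ety.
  rewrite Ety; exact (mor_map_comp _ _ _ _ _ (base_map_spec y) Hres).
Qed.

Definition depth (x : V T) : nat :=
  epsilon (inhabits 0) (fun n => Nat.iter n (parent T) x = root T).

Lemma depth_spec x : Nat.iter (depth x) (parent T) x = root T.
Proof. unfold depth; apply epsilon_spec, reach_root. Qed.

Definition frame (x : V T) : V T -> V T := frame_fuel (depth x) x.

Lemma frame_spec x : mor_map (rep_of x) x (frame x).
Proof. apply frame_fuel_spec, depth_spec. Qed.

Lemma frame_unfold x z : x <> root T ->
  frame x z = frame (parent T x)
    (base_map (inv_on (rep_of (parent T x)) (frame (parent T x)) x) z).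
Proof.
  intros Nx; unfold frame at 1.
  rewrite (frame_fuel_succ _ _ (depth_spec x)), frame_fuel_S.
  destruct (excluded_middle_informative (x = root T)); [contradiction|].
  replace (frame_fuel (depth x) (parent T x)) with (frame (parent T x)); [reflexivity|].
  apply frame_fuel_indep; [apply depth_spec|].
  rewrite <- Nat.iter_succ_r, Nat.iter_succ, depth_spec; apply parent_root.
Qed.

Lemma frame_rep v : frame v (rep_of v) = v.
Proof. exact (mor_map_root _ _ _ (frame_spec v)). Qed.

Lemma frame_coherent u y : desc T (rep_of u) y ->
  exists Th, mor_map (rep_of y) y Th /\
    forall v, typ T ss v = typ T ss u -> forall z, desc T (rep_of y) z ->
      frame (frame v y) z = frame v (Th z).
Proof.
  intros [n Hn]; revert y Hn; induction n as [|n IH]; intros y Hy;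
    (destruct (excluded_middle_informative (y = rep_of u)) as [->|Ny];
     [ exists (fun z => z); rewrite rep_typ; split; [apply mor_map_id|];
       intros v Hv z _; rewrite <- Hv, frame_rep; reflexivity |]);
    [contradiction|].
  pose proof Hy as Hy0; rewrite Nat.iter_succ_r in Hy0.
  set (p := parent T y) in *.
  destruct (IH p Hy0) as [Thp [Mp Hp]].
  destruct (inv_on_spec _ _ Thp y Mp (desc_parent T y)) as [h1 h2].
  set (y' := inv_on _ Thp y) in *.
  pose proof (mor_map_restr _ _ _ Mp y' h1) as Hres; rewrite h2 in Hres.
  pose proof (mor_map_typ _ _ _ Mp y' h1) as Ety; rewrite h2 in Ety.
  exists (fun z => Thp (base_map y' z)); split.
  { rewrite Ety; exact (mor_map_comp _ _ _ _ _ (base_map_spec y') Hres). }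
  intros v Hv z Hz.
  pose proof (frame_spec v) as Fv; rewrite Hv in Fv.
  assert (Dp : desc T (rep_of u) p) by (exists n; exact Hy0).
  assert (Dy : desc T (rep_of u) y) by (exists (S n); exact Hy).
  assert (Cpy : child T p y).
  { split; [reflexivity|]; intros E; apply Ny.
    rewrite <- Hy; symmetry; apply iter_parent_fixed; symmetry; exact E. }
  destruct (mor_map_child _ _ _ Fv p y Dp Dy Cpy) as [Ep Np].
  assert (Nroot : frame v y <> root T).
  { intros E; apply Np; rewrite <- Ep, E; symmetry; apply parent_root. }
  rewrite (frame_unfold _ z Nroot), Ep.
  pose proof (frame_spec (frame v p)) as Fp.
  rewrite (mor_map_typ _ _ _ Fv p Dp) in Fp |- *.
  assert (Epy : frame (frame v p) y' = frame v y) by (rewrite (Hp v Hv y' h1), h2; reflexivity).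
  rewrite <- Epy, (inv_on_cancel _ _ _ y' Fp h1); apply Hp; [exact Hv|].
  apply (desc_trans T _ y' _ h1), (mor_map_desc _ _ _ (base_map_spec y')).
  rewrite <- Ety; exact Hz.
Qed.

Definition transfer (v w : V T) (x : V T) : V T :=
  frame w (inv_on (rep_of v) (frame v) x).

Lemma transfer_spec v w : typ T ss v = typ T ss w -> mor_map v w (transfer v w).
Proof.
  intros E; pose proof (frame_spec w) as Fw; rewrite <- E in Fw.
  exact (mor_map_comp _ _ _ _ _ (mor_map_inv _ _ _ (frame_spec v)) Fw).
Qed.

Lemma transfer_comp u v w x : typ T ss u = typ T ss v -> desc T u x ->
  transfer v w (transfer u v x) = transfer u w x.
Proof.
  intros E hx; unfold transfer; rewrite <- E.
  destruct (inv_on_spec _ _ _ x (frame_spec u) hx) as [h1 _].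
  pose proof (frame_spec v) as Fv; rewrite <- E in Fv.
  rewrite (inv_on_cancel _ _ _ _ Fv h1); reflexivity.
Qed.

Lemma transfer_restr v w a z : typ T ss v = typ T ss w -> desc T v a -> desc T a z ->
  transfer a (transfer v w a) z = transfer v w z.
Proof.
  intros E ha hz.
  destruct (inv_on_spec _ _ _ a (frame_spec v) ha) as [h1 h2].
  set (y := inv_on _ (frame v) a) in *.
  destruct (frame_coherent v y h1) as [Th [MTh HTh]].
  assert (Eta : typ T ss a = typ T ss y)
    by (rewrite <- h2; exact (mor_map_typ _ _ _ (frame_spec v) y h1)).
  pose proof (frame_spec a) as Fa; rewrite Eta in Fa.
  destruct (inv_on_spec _ _ _ z Fa hz) as [q1 q2].
  unfold transfer at 1 3; rewrite Eta; set (q := inv_on _ (frame a) z) in *.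
  rewrite <- h2, (HTh v eq_refl q q1) in q2; rewrite <- q2.
  assert (Dq : desc T (rep_of v) (Th q))
    by exact (desc_trans T _ y _ h1 (mor_map_desc _ _ _ MTh q q1)).
  rewrite (inv_on_cancel _ _ _ _ (frame_spec v) Dq).
  exact (HTh w (eq_sym E) q q1).
Qed.

End RigidStructure.

Theorem mainTheorem11 (T : rtree) (S : selfsim T) :
  exists phi : forall v w : V T, sub T v -> sub T w,
    (forall v w, typ T S v = typ T S w -> Mor T S v w (phi v w)) /\
    (forall u v w, typ T S u = typ T S v -> typ T S v = typ T S w ->
       forall x : sub T u, phi v w (phi u v x) = phi u w x) /\
    (forall v w, typ T S v = typ T S w ->
       forall v' : sub T v,
         is_restriction T v w (proj1_sig v') (proj1_sig (phi v w v'))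
           (phi (proj1_sig v') (proj1_sig (phi v w v'))) (phi v w)).
Proof.
  exists (fun v w a => tosub T w (transfer T S v w (proj1_sig a))).
  split; [|split].
  - intros v w E; exact (Mor_of_mor_map T S _ _ _ (transfer_spec T S v w E)).
  - intros u v w E1 _ [x hx]; apply sub_eq; simpl.
    rewrite (tosub_eq T v) by exact (mor_map_desc T S _ _ _ (transfer_spec T S u v E1) x hx).
    rewrite (transfer_comp T S u v w x E1 hx); reflexivity.
  - intros v w E [a ha] [z hza] hz; simpl in *.
    pose proof (transfer_spec T S v w E) as Tvw.
    rewrite (tosub_eq T w _ (mor_map_desc T S _ _ _ Tvw a ha)),
            (tosub_eq T w _ (mor_map_desc T S _ _ _ Tvw z hz)),
            (transfer_restr T S v w a z E ha hza).
    apply tosub_eq, (mor_map_desc T S _ _ _ (mor_map_restr T S _ _ _ Tvw a ha) z hza).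
Qed.
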